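(* Consider the asynchronous dynamic game described in the context, with fixed $A\in\mathbb{R}^{n\times n}$, $B\in\mathbb{R}^{n\times k}$, and let $l=2j+1$ be an odd epoch. The game is in lock mode from epoch $l$ on, i.e. there exists $\gamma$ with $\Phi_i=\gamma$ for all $i\ge l$, if and only if the matrix $C_l$ chosen by the attacker in epoch $l$ satisfies $\dim\mathcal{V}^*(C_l)=\min_{C\in\mathbb{R}^{m\times n}}\dim\operatorname{Ker}\Omega(C,F_{l-1})$.
   Context: For $C\in\mathbb{R}^{m\times n}$, $F\in\mathbb{R}^{k\times n}$ let $\Omega(C,F)=[C;\,C(A+BF);\,\dots;\,C(A+BF)^{n-1}]$ (observability matrix of $\dot x=(A+BF)x$, $y=Cx$). A subspace $\mathcal{V}$ is $(A,B)$-invariant if $(A+BF)\mathcal{V}\subseteq\mathcal{V}$ for some $F$ (a friend of $\mathcal{V}$); $\mathcal{V}^*(C)$ is the maximal $(A,B)$-invariant subspace in $\operatorname{Ker}C$, and $\mathcal{F}(\mathcal{V}^*(C))$ its set of friends. Best responses: $BR1_a(F)=\arg\min_{C}\dim\operatorname{Ker}\Omega(C,F)$; $BR1_d(C)=\arg\max_{F}\dim\operatorname{Ker}\Omega(C,F)$ ($=\mathcal{F}(\mathcal{V}^*(C))$); $BR2_a(F)=\arg\min_{C\in BR1_a(F)}\dim\mathcal{V}^*(C)$; $BR2_d(C)=\arg\max_{F\in BR1_d(C)}\min_{C'\in\mathbb{R}^{m\times n}}\dim\operatorname{Ker}\Omega(C',F)$. The game: an initial $F_0$ is given; in each odd epoch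 $i$ the attacker chooses $C_i\in BR2_a(F_{i-1})$ (keeping $C_i=C_{i-2}$ whenever $C_{i-2}\in BR2_a(F_{i-1})$), $F_i=F_{i-1}$, and the value is $\Phi_i=\min_{C}\dim\operatorname{Ker}\Omega(C,F_{i-1})$; in each even epoch $i$ the defender chooses $F_i\in BR2_d(C_{i-1})$ (keeping $F_i=F_{i-2}$ whenever $F_{i-2}\in BR2_d(C_{i-1})$), $C_i=C_{i-1}$, and the value is $\Phi_i=\max_{F}\dim\operatorname{Ker}\Omega(C_{i-1},F)$. *)

From HB Require Import structures.
From mathcomp Require Import all_boot all_order all_algebra.
From mathcomp Require Import boolp classical_sets reals.
Set Implicit Arguments. Unset Strict Implicit. Unset Printing Implicit Defensive.
Import Order.TTheory GRing.Theory Num.Theory.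
Local Open Scope ring_scope.

(* Conventions: vectors x in R^n are column vectors; a subspace V of R^n is
   encoded by a square matrix V : 'M_n whose ROW space is {x^T | x in V}.
   Hence dim V = \rank V, and M V <= V  <=>  (V *m M^T <= V)%MS. *)

Section Game.
Variables (R : realType) (n m k : nat) (A : 'M[R]_n) (B : 'M[R]_(n, k)).

Definition Acl (F : 'M[R]_(k, n)) : 'M[R]_n := A + B *m F.

Definition Omega (C : 'M[R]_(m, n)) (F : 'M[R]_(k, n))
  : 'M[R]_(\sum_(i < n) m, n) :=
  \mxcol_(i < n) (C *m (Acl F) ^+ i).

Definition Ker p (M : 'M[R]_(p, n)) : 'M[R]_n := kermx M^T.

Definition kerOmega (C : 'M[R]_(m, n)) (F : 'M[R]_(k, n)) : nat :=
  \rank (Ker (Omega C F)).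

Definition invariant_under (M : 'M[R]_n) (V : 'M[R]_n) : bool :=
  (V *m M^T <= V)%MS.

Definition friend (V : 'M[R]_n) (F : 'M[R]_(k, n)) : bool :=
  invariant_under (Acl F) V.

Definition ABinvariant (V : 'M[R]_n) : Prop := exists F, friend V F.

Definition is_Vstar (C : 'M[R]_(m, n)) (V : 'M[R]_n) : Prop :=
  [/\ (V <= Ker C)%MS, ABinvariant V &
      forall W : 'M[R]_n, (W <= Ker C)%MS -> ABinvariant W -> (W <= V)%MS].

Definition Vstar (C : 'M[R]_(m, n)) : 'M[R]_n := xget 0 (is_Vstar C).

Definition dimVstar (C : 'M[R]_(m, n)) : nat := \rank (Vstar C).

Lemma minKer_ex (F : 'M[R]_(k, n)) :
  exists d, `[< exists C : 'M[R]_(m, n), kerOmega C F = d >].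
Proof. by exists (kerOmega 0 F); apply/asboolP; exists 0. Qed.

Definition minKer (F : 'M[R]_(k, n)) : nat := ex_minn (@minKer_ex F).

Lemma maxKer_ex (C : 'M[R]_(m, n)) :
  exists d, `[< exists F : 'M[R]_(k, n), kerOmega C F = d >].
Proof. by exists (kerOmega C 0); apply/asboolP; exists 0. Qed.

Lemma maxKer_ub (C : 'M[R]_(m, n)) :
  forall d, `[< exists F : 'M[R]_(k, n), kerOmega C F = d >] -> (d <= n)%N.
Proof. by move=> d /asboolP [F <-]; exact: rank_leq_col. Qed.

Definition maxKer (C : 'M[R]_(m, n)) : nat := @ex_maxn _ n (@maxKer_ex C) (@maxKer_ub C).

Definition BR1a (F : 'M[R]_(k, n)) (C : 'M[R]_(m, n)) : Prop :=
  forall C', (kerOmega C F <= kerOmega C' F)%N.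
Definition BR1d (C : 'M[R]_(m, n)) (F : 'M[R]_(k, n)) : Prop :=
  forall F', (kerOmega C F' <= kerOmega C F)%N.
Definition BR2a (F : 'M[R]_(k, n)) (C : 'M[R]_(m, n)) : Prop :=
  BR1a F C /\ forall C', BR1a F C' -> (dimVstar C <= dimVstar C')%N.
Definition BR2d (C : 'M[R]_(m, n)) (F : 'M[R]_(k, n)) : Prop :=
  BR1d C F /\ forall F', BR1d C F' -> (minKer F' <= minKer F)%N.

(* A play of the game: epochs i = 1, 2, ...; Fs 0 = F0 is the initial
   feedback; Cs 0 is irrelevant. *)
Definition is_play (F0 : 'M[R]_(k, n))
    (Cs : nat -> 'M[R]_(m, n)) (Fs : nat -> 'M[R]_(k, n)) : Prop :=
  Fs 0%N = F0 /\
  forall i : nat, (1 <= i)%N ->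
    if odd i then
      [/\ BR2a (Fs i.-1) (Cs i),
          ((3 <= i)%N -> BR2a (Fs i.-1) (Cs (i - 2)%N) -> Cs i = Cs (i - 2)%N)
        & Fs i = Fs i.-1]
    else
      [/\ BR2d (Cs i.-1) (Fs i),
          (BR2d (Cs i.-1) (Fs (i - 2)%N) -> Fs i = Fs (i - 2)%N)
        & Cs i = Cs i.-1].

Definition Phi (Cs : nat -> 'M[R]_(m, n)) (Fs : nat -> 'M[R]_(k, n)) (i : nat)
  : nat :=
  if odd i then minKer (Fs i.-1) else maxKer (Cs i.-1).

End Game.

From HB Require Import structures.
From mathcomp Require Import all_boot all_order all_algebra.
From mathcomp Require Import boolp classical_sets reals.
Set Implicit Arguments. Unset Strict Implicit. Unset Printing Implicit Defensive.
Import Order.TTheory GRing.Theory Num.Theory.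

(* By Cayley-Hamilton, Ker Omega(C,F) is the largest (A+BF)-invariant subspace
   of Ker C.  Hence it always lies in V*(C), with equality when F is a friend
   of V*(C), so that max_F dim Ker Omega(C,F) = dim V*(C).  In the odd epoch l
   the value is Phi_l = min_C dim Ker Omega(C,F_(l-1)), and in the next one
   Phi_(l+1) = dim V*(C_l): this gives necessity.  Conversely, if the two
   agree, the squeeze
     min_C dim Ker Omega(C,F_(l-1)) <= dim Ker Omega(C_l,F_(l-1)) <= dim V*(C_l)
   makes F_(l-1) a best response to C_l, and the keep rules
   then freeze C_l and F_(l-1) forever. *)

Section CayleyHamilton.
Local Open Scope ring_scope.

Lemma exp_mx_span (F : fieldType) n (M : 'M[F]_n) p :
  exists c : 'I_n -> F, M ^+ p = \sum_(i < n) c i *: M ^+ i.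
Proof.
case: n M => [|n] M.
  by exists (fun _ => 0); rewrite big_ord0; apply/matrixP => -[].
have deg_le : (degree_mxminpoly M <= n.+1)%N.
  have := dvdp_leq (monic_neq0 (char_poly_monic M)) (mxminpoly_dvd_char M).
  by rewrite size_mxminpoly size_char_poly.
have : (mxvec (M ^+ p) <= powers_mx M n.+1)%MS.
  have := horner_mx_mem M 'X^p; rewrite rmorphXn /= horner_mx_X.
  move/submx_trans; apply; apply/row_subP => i; rewrite rowK.
  by apply: (eq_row_sub (widen_ord deg_le i)); rewrite rowK.
case/submxP=> u Mp; exists (fun i => u 0 i).
apply: (can_inj mxvecK); rewrite Mp mulmx_sum_row linear_sum.
by apply: eq_bigr => i _; rewrite rowK linearZ.
Qed.

End CayleyHamilton.

Section Subspaces.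
Variables (R : realType) (n m k : nat) (A : 'M[R]_n) (B : 'M[R]_(n, k)).
Local Open Scope ring_scope.

Lemma sub_Ker p (C : 'M[R]_(p, n)) q (X : 'M[R]_(q, n)) :
  (X <= Ker C)%MS = (C *m X^T == 0).
Proof.
by rewrite sub_kermx -(inj_eq (@trmx_inj _ _ _)) trmx_mul trmxK trmx0.
Qed.

Lemma sub_Ker_OmegaP (C : 'M[R]_(m, n)) F q (X : 'M[R]_(q, n)) :
  (X <= Ker (Omega A B C F))%MS <->
  (forall p, C *m Acl A B F ^+ p *m X^T = 0).
Proof.
rewrite sub_Ker /Omega mxcol_mul -mxcol0; split=> [/eqP XK p | XK].
  have Xi (i : 'I_n) : C *m Acl A B F ^+ i *m X^T = 0.
    by have := congr1 (fun M => submxcol M i) XK; rewrite !mxcolK.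
  have [c ->] := exp_mx_span (Acl A B F) p.
  rewrite mulmx_sumr mulmx_suml big1 // => i _.
  by rewrite -scalemxAr -scalemxAl Xi scaler0.
by apply/eqP/mxcolP => i; rewrite !mxcolK XK.
Qed.

Lemma Ker_Omega_sub_Ker (C : 'M[R]_(m, n)) F :
  (Ker (Omega A B C F) <= Ker C)%MS.
Proof.
have /sub_Ker_OmegaP/(_ 0%N) := submx_refl (Ker (Omega A B C F)).
by rewrite expr0 mulmx1 sub_Ker => ->.
Qed.

Lemma Ker_Omega_friend (C : 'M[R]_(m, n)) F :
  friend A B (Ker (Omega A B C F)) F.
Proof.
rewrite /friend /invariant_under; apply/sub_Ker_OmegaP => p.
rewrite trmx_mul trmxK mulmxA -(mulmxA C) mulmxE.
by rewrite -exprSr; move: p.+1; apply/sub_Ker_OmegaP.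
Qed.

Lemma invariant_under_exp (M V : 'M[R]_n) p :
  invariant_under M V -> invariant_under (M ^+ p) V.
Proof.
rewrite /invariant_under => MV; elim: p => [|p IH].
  by rewrite expr0 trmx1 mulmx1.
rewrite exprS -mulmxE trmx_mul mulmxA.
exact: submx_trans (submxMr _ IH) MV.
Qed.

Lemma friend_sub_Ker_Omega (C : 'M[R]_(m, n)) F (V : 'M[R]_n) :
  (V <= Ker C)%MS -> friend A B V F -> (V <= Ker (Omega A B C F))%MS.
Proof.
move=> VC /invariant_under_exp FV; apply/sub_Ker_OmegaP => p.
have /(submx_trans (FV p)) : (V <= Ker C)%MS := VC.
by rewrite sub_Ker trmx_mul trmxK mulmxA => /eqP.
Qed.

Lemma ABinvariantP (V : 'M[R]_n) :
  ABinvariant A B V <-> (V *m A^T <= V + B^T)%MS.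
Proof.
split=> [[F] | AV].
  rewrite /friend /invariant_under /Acl linearD /= trmx_mul => FV.
  have -> : V *m A^T = V *m (A^T + F^T *m B^T) - (V *m F^T) *m B^T.
    by rewrite mulmxDr mulmxA addrK.
  rewrite addmx_sub ?(submx_trans FV (addsmxSl _ _)) //.
  by rewrite -mulNmx (submx_trans (submxMl _ _) (addsmxSr _ _)).
have eqV := eq_row_base V; set V' := row_base V in eqV *.
have /sub_addsmxP[u AV'] : (V' *m A^T <= V + B^T)%MS by rewrite (eqmxMr _ eqV).
have /row_freeP[G V'G] := row_base_free V.
exists (G *m - u.2)^T; rewrite /friend /invariant_under /Acl linearD /=.
rewrite trmx_mul trmxK -(eqmxMr _ eqV) mulmxDr !mulmxA V'G mul1mx AV' mulNmx.
by rewrite addrK submxMl.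
Qed.

Lemma ABinvariant0 : ABinvariant A B 0.
Proof. by exists 0; rewrite /friend /invariant_under mul0mx sub0mx. Qed.

Lemma ABinvariantD (V W : 'M[R]_n) :
  ABinvariant A B V -> ABinvariant A B W -> ABinvariant A B (V + W)%MS.
Proof.
move=> /ABinvariantP AV /ABinvariantP AW; apply/ABinvariantP.
rewrite addsmxMr addsmx_sub.
rewrite (submx_trans AV) ?addsmxS ?addsmxSl //.
by rewrite (submx_trans AW) ?addsmxS ?addsmxSr.
Qed.

(* (A,B)-invariant subspaces of Ker C are closed under sums, so one of maximal
   rank contains all the others. *)
Lemma Vstar_exists (C : 'M[R]_(m, n)) : exists V, is_Vstar A B C V.
Proof.
pose P d := `[< exists V : 'M[R]_n,
  [/\ ABinvariant A B V, (V <= Ker C)%MS & \rank V = d] >].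
have P0 : exists d, P d.
  exists 0%N; apply/asboolP; exists 0.
  by rewrite sub0mx mxrank0; split=> //; exact: ABinvariant0.
have Pn d : P d -> (d <= n)%N.
  by move=> /asboolP[V [_ _ <-]]; exact: rank_leq_col.
case: (ex_maxnP P0 Pn) => _ /asboolP[V [AV VC <-]] Vmax.
exists V; split=> // W WC AW.
have /Vmax rkVW : P (\rank (V + W)%MS).
  apply/asboolP; exists (V + W)%MS.
  by rewrite addsmx_sub VC WC; split=> //; exact: ABinvariantD.
have [_ eqVW] := mxrank_leqif_sup (addsmxSl V W).
apply: submx_trans (addsmxSr V W) _.
by rewrite -eqVW eqn_leq rkVW mxrankS ?addsmxSl.
Qed.

Lemma Vstar_spec (C : 'M[R]_(m, n)) : is_Vstar A B C (Vstar A B C).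
Proof. exact: xgetPex (Vstar_exists C). Qed.

Lemma kerOmega_le_dimVstar (C : 'M[R]_(m, n)) F :
  (kerOmega A B C F <= dimVstar A B C)%N.
Proof.
have [_ _ Vmax] := Vstar_spec C; apply/mxrankS/Vmax.
  exact: Ker_Omega_sub_Ker.
by exists F; exact: Ker_Omega_friend.
Qed.

Lemma kerOmega_friend_Vstar (C : 'M[R]_(m, n)) :
  exists F, kerOmega A B C F = dimVstar A B C.
Proof.
have [VC [F FV] _] := Vstar_spec C; exists F; apply/eqP.
by rewrite eqn_leq kerOmega_le_dimVstar mxrankS ?friend_sub_Ker_Omega.
Qed.

Lemma maxKer_dimVstar (C : 'M[R]_(m, n)) : maxKer A B C = dimVstar A B C.
Proof.
rewrite /maxKer; case: ex_maxnP => _ /asboolP[F0 <-] Kmax.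
apply/eqP; rewrite eqn_leq kerOmega_le_dimVstar /=.
have [F <-] := kerOmega_friend_Vstar C; apply: Kmax.
by apply/asboolP; exists F.
Qed.

Lemma minKer_le F (C : 'M[R]_(m, n)) : (minKer m A B F <= kerOmega A B C F)%N.
Proof.
by rewrite /minKer; case: ex_minnP => d _; apply; apply/asboolP; exists C.
Qed.

Lemma BR2d_of_dimVstar (C : 'M[R]_(m, n)) F :
  dimVstar A B C = minKer m A B F -> BR2d A B C F.
Proof.
move=> VF; have KF : kerOmega A B C F = dimVstar A B C.
  by apply/eqP; rewrite eqn_leq kerOmega_le_dimVstar VF minKer_le.
split=> [F' | F' _]; first by rewrite KF kerOmega_le_dimVstar.
by rewrite -VF (leq_trans (minKer_le F' C)) ?kerOmega_le_dimVstar.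
Qed.

End Subspaces.

Section Play.
Variables (R : realType) (n m k : nat) (A : 'M[R]_n) (B : 'M[R]_(n, k)).
Variables (F0 : 'M[R]_(k, n)).
Variables (Cs : nat -> 'M[R]_(m, n)) (Fs : nat -> 'M[R]_(k, n)).
Hypothesis play : is_play A B F0 Cs Fs.

Lemma play_odd i : odd i ->
  [/\ BR2a A B (Fs i.-1) (Cs i),
      (3 <= i)%N -> BR2a A B (Fs i.-1) (Cs (i - 2)) -> Cs i = Cs (i - 2)
    & Fs i = Fs i.-1].
Proof. by case: play => _ /(_ i (odd_gt0 _)) + oi => /(_ oi); rewrite oi. Qed.

Lemma play_even i : (0 < i)%N -> ~~ odd i ->
  [/\ BR2d A B (Cs i.-1) (Fs i),
      BR2d A B (Cs i.-1) (Fs (i - 2)) -> Fs i = Fs (i - 2)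
    & Cs i = Cs i.-1].
Proof. by case: play => _ /(_ i) + i0 /negbTE ei => /(_ i0); rewrite ei. Qed.

Variables (F : 'M[R]_(k, n)) (C : 'M[R]_(m, n)).
Hypotheses (attackC : BR2a A B F C) (defendF : BR2d A B C F).

Lemma play_lock_step i : (0 < i)%N -> Fs i.-1 = F -> Cs i = C ->
  Fs i = F /\ Cs i.+1 = C.
Proof.
move=> i0 Fi Ci; have [oi | ei] := boolP (odd i).
  have ei1 : ~~ odd i.+1 by rewrite /= negbK.
  by have [_ _ ->] := play_odd oi; have [_ _ ->] := play_even (ltn0Sn i) ei1.
case: i i0 ei Fi Ci => [|[|i]] // _ ei Fi Ci.
have oi1 : odd i.+1 by move: ei; rewrite oddS negbK.
have [_ _ Fi1] := play_odd oi1.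
have [_ keepF Ci2] := play_even (ltn0Sn i.+1) ei.
have Fi' : Fs i = F by rewrite -Fi1.
have Ci' : Cs i.+1 = C by rewrite -Ci2.
have Fi2 : Fs i.+2 = F by rewrite keepF !subSS subn0 // Ci' Fi'.
have [_ keepC _] := play_odd (i := i.+3) ei.
have i3 : (i.+3 - 2)%N = i.+1 by rewrite !subSS subn0.
by split=> //; rewrite keepC // i3 Ci' Fi2.
Qed.

Lemma play_locked l : (0 < l)%N -> Fs l.-1 = F -> Cs l = C ->
  forall i, (l <= i)%N -> Fs i.-1 = F /\ Cs i = C.
Proof.
move=> l0 Fl Cl; elim=> [/(leq_trans l0) // | i IH].
rewrite leq_eqVlt ltnS => /predU1P[<- // | li].
have [Fi Ci] := IH li; exact: play_lock_step (leq_trans l0 li) Fi Ci.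
Qed.

Lemma Phi_locked l : odd l -> Fs l.-1 = F -> Cs l = C ->
  dimVstar A B C = minKer m A B F ->
  forall i, (l <= i)%N -> Phi A B Cs Fs i = minKer m A B F.
Proof.
move=> ol Fl Cl VF i li; have lock := play_locked (odd_gt0 ol) Fl Cl.
rewrite /Phi; case: ifPn => oi; first by have [-> _] := lock i li.
have li' : (l < i)%N by rewrite ltn_neqAle li andbT; apply: contraNneq oi => <-.
have li1 : (l <= i.-1)%N by rewrite -ltnS (ltn_predK li').
by have [_ ->] := lock _ li1; rewrite maxKer_dimVstar.
Qed.

End Play.

Theorem theorem1 (R : realType) (n m k : nat) (A : 'M[R]_n) (B : 'M[R]_(n, k))
    (F0 : 'M[R]_(k, n)) (Cs : nat -> 'M[R]_(m, n)) (Fs : nat -> 'M[R]_(k, n))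
    (j : nat) :
  is_play A B F0 Cs Fs ->
  let l := (2 * j).+1 in
  (exists gamma : nat, forall i : nat, (l <= i)%N -> Phi A B Cs Fs i = gamma)
  <-> dimVstar A B (Cs l) = minKer m A B (Fs l.-1).
Proof.
move=> play l; have ol : odd l by rewrite /= mul2n odd_double.
have [attack _ _] := play_odd play ol.
split=> [[gamma Phi_gamma] | VF].
  have := Phi_gamma l.+1 (leqnSn l); have := Phi_gamma l (leqnn l).
  by rewrite /Phi oddS ol /= maxKer_dimVstar => -> ->.
exists (minKer m A B (Fs l.-1)) => i li.
exact: (Phi_locked play attack (BR2d_of_dimVstar VF) ol erefl erefl VF li).
Qed.
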